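(* Let $G$ be a non-cyclic simple dimension group admitting a trace with rational values, i.e. a nonzero homomorphism $\tau:G\to\mathbb R$ with $\tau(G^+)\ge0$ and $\tau(G)\subseteq\mathbb Q$. Then $G$ is globally irrationally miscible.
   Context: A dimension group is an unperforated partially ordered abelian group with the Riesz interpolation property; simple means no nontrivial order ideals (then every nonzero positive element is an order unit). For an order unit $u$, $S(G,u)$ is the set of states (homomorphisms $\sigma:G\to\mathbb R$, $\sigma(G^+)\ge0$, $\sigma(u)=1$); $J(G,u)=\{g:\sigma\mapsto\sigma(g)\text{ constant on }S(G,u)\}$ and $\Phi(g)$ is the constant. $(G,u)$ is irrationally miscible if $\Phi(J(G,u))\subseteq\mathbb Q$; $G$ is globally irrationally miscible if $(G,u)$ is irrationally miscible for every order unit $u$. *)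

From Stdlib Require Import Rdefinitions.
From HB Require Import structures.
From mathcomp Require Import all_boot all_order all_algebra.
From mathcomp Require Import Rstruct.
Set Implicit Arguments. Unset Strict Implicit. Unset Printing Implicit Defensive.
Import Order.TTheory GRing.Theory Num.Theory.
Local Open Scope ring_scope.

(* A partially ordered abelian group is a zmodType G together with a
   positive cone P : G -> Prop. *)
Section PoGroups.
Variable G : zmodType.
Variable P : G -> Prop.

Definition po_le (x y : G) : Prop := P (y - x).

Definition is_pogroup : Prop :=
  [/\ P 0, (forall x y, P x -> P y -> P (x + y)) &
      (forall x, P x -> P (- x) -> x = 0)].

Definition unperforated : Prop :=
  forall (n : nat) (x : G), (0 < n)%N -> P (x *+ n) -> P x.

Definition riesz_interpolation : Prop :=
  forall a1 a2 b1 b2 : G,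
    po_le a1 b1 -> po_le a1 b2 -> po_le a2 b1 -> po_le a2 b2 ->
    exists c, [/\ po_le a1 c, po_le a2 c, po_le c b1 & po_le c b2].

Definition dimension_group : Prop :=
  [/\ is_pogroup, unperforated & riesz_interpolation].

Definition order_ideal (I : G -> Prop) : Prop :=
  [/\ I 0, (forall x y, I x -> I y -> I (x - y)),
      (forall a b, P a -> po_le a b -> I b -> I a) &
      (forall x, I x -> exists a b, [/\ I a, P a, I b, P b & x = a - b])].

Definition simple_pogroup : Prop :=
  forall I, order_ideal I -> (forall x, I x -> x = 0) \/ (forall x, I x).

Definition order_unit (u : G) : Prop :=
  P u /\ forall x : G, exists n : nat, po_le x (u *+ n).

Definition is_hom (s : G -> R) : Prop := forall x y, s (x + y) = s x + s y.

Definition is_state (u : G) (s : G -> R) : Prop :=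
  [/\ is_hom s, (forall x, P x -> 0 <= s x) & s u = 1].

Definition in_J (u : G) (g : G) : Prop :=
  forall s1 s2, is_state u s1 -> is_state u s2 -> s1 g = s2 g.

Definition is_rational (r : R) : Prop := exists q : rat, r = ratr q.

(* Phi(J(G,u)) is contained in Q: the common value of the states on any
   g in J(G,u) is rational *)
Definition irrationally_miscible (u : G) : Prop :=
  forall g, in_J u g -> forall s, is_state u s -> is_rational (s g).

Definition globally_irrationally_miscible : Prop :=
  forall u, order_unit u -> irrationally_miscible u.

Definition rational_trace (tau : G -> R) : Prop :=
  [/\ is_hom tau, (exists x, tau x <> 0), (forall x, P x -> 0 <= tau x) &
      (forall x, is_rational (tau x))].

End PoGroups.

Definition cyclic_group (G : zmodType) : Prop :=
  exists g : G, forall x : G, exists z : int, x = g *~ z.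

From Stdlib Require Import Rdefinitions.
From HB Require Import structures.
From mathcomp Require Import all_boot all_order all_algebra.
From mathcomp Require Import Rstruct.
Set Implicit Arguments. Unset Strict Implicit. Unset Printing Implicit Defensive.
Import Order.TTheory GRing.Theory Num.Theory.
Local Open Scope ring_scope.

(* A positive trace is strictly positive on every order unit u, so
   tau / tau u is a state on (G, u); it takes rational values.  On J(G, u)
   all states agree, hence the common value Phi(g) is the rational number
   tau g / tau u. *)

Section Homomorphisms.
Variables (G : zmodType) (t : G -> R).
Hypothesis t_hom : is_hom t.

Lemma hom0 : t 0 = 0.
Proof. by apply: (addrI (t 0)); rewrite -t_hom !addr0. Qed.

Lemma homN x : t (- x) = - t x.
Proof. by apply/eqP; rewrite -subr_eq0 opprK -t_hom addNr hom0. Qed.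

Lemma homMn x n : t (x *+ n) = t x *+ n.
Proof. by elim: n => [|n IHn]; rewrite ?mulr0n ?hom0 // !mulrS t_hom IHn. Qed.

End Homomorphisms.

Lemma is_rational_div (r1 r2 : R) :
  is_rational r1 -> is_rational r2 -> is_rational (r1 / r2).
Proof. by move=> [q1 ->] [q2 ->]; exists (q1 / q2); rewrite fmorph_div. Qed.

Section PositiveTraces.
Variables (G : zmodType) (P : G -> Prop) (tau : G -> R) (u : G).
Hypotheses (tau_hom : is_hom tau) (tau_ge0 : forall x, P x -> 0 <= tau x).
Hypothesis u_unit : order_unit P u.

Lemma trace_le_order_unit x : exists n, tau x <= tau u *+ n.
Proof.
have [n x_le] := u_unit.2 x; exists n.
by have := tau_ge0 x_le; rewrite tau_hom homN // homMn // subr_ge0.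
Qed.

Lemma trace_order_unit_gt0 : (exists x, tau x <> 0) -> 0 < tau u.
Proof.
move=> [x tau_x_neq0]; rewrite lt_neqAle (tau_ge0 u_unit.1) andbT.
apply/eqP => tau_u0; apply: tau_x_neq0; apply/eqP; rewrite eq_le.
have [m] := trace_le_order_unit x; have [n] := trace_le_order_unit (- x).
by rewrite -tau_u0 !mul0rn homN // oppr_le0 => -> ->.
Qed.

Lemma normalized_trace_state :
  0 < tau u -> is_state P u (fun x => tau x / tau u).
Proof.
move=> tau_u_gt0; split.
- by move=> x y; rewrite tau_hom mulrDl.
- by move=> x Px; rewrite divr_ge0 ?(tau_ge0 Px) ?ltW.
- by rewrite divff ?gt_eqF.
Qed.

End PositiveTraces.

Lemma rational_state_miscible (G : zmodType) (P : G -> Prop) (u : G) s0 :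
  is_state P u s0 -> (forall x, is_rational (s0 x)) ->
  irrationally_miscible P u.
Proof. by move=> s0_state s0_rat g gJ s s_state; rewrite (gJ s s0). Qed.

Theorem mainTheorem13 (G : zmodType) (P : G -> Prop) :
  dimension_group P -> simple_pogroup P -> ~ cyclic_group G ->
  (exists tau : G -> R, rational_trace P tau) ->
  globally_irrationally_miscible P.
Proof.
move=> _ _ _ [tau [tau_hom tau_neq0 tau_ge0 tau_rat]] u u_unit.
have tau_u_gt0 := trace_order_unit_gt0 tau_hom tau_ge0 u_unit tau_neq0.
apply: rational_state_miscible (normalized_trace_state tau_hom tau_ge0 tau_u_gt0) _.
by move=> x; apply: is_rational_div.
Qed.
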